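(* Let $D>0$, let $(L,\mathbf N)$ be an architecture with $N_0=d$, let $q\in[1,\infty]$, $r\ge1$, $\eta>0$, and let $Q_\eta:\Theta_{L,\mathbf N}\to\Theta_{L,\mathbf N}$ act coordinatewise by $Q_\eta(x)=\lfloor x/\eta\rfloor\eta$. Let $N_{\min}=\min_{0\le\ell\le L}N_\ell$ and $c':=DN_{\min}^{1/q}$. If $\varepsilon>0$ is such that $$\max_{\theta\in\Theta^q_{L,\mathbf N}(r)}\ \max_{x\in[-D,D]^d}\|R_\theta(x)-R_{Q_\eta(\theta)}(x)\|_q\le\varepsilon,$$ then $\min(r,\eta)\le\frac{\varepsilon}{c'r^{L-1}}$. In particular, if moreover $\varepsilon<c'r^L$, then $\eta\le\frac{\varepsilon}{c'r^{L-1}}$.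
   Context: ReLU $\rho(x)=\max(0,x)$ coordinatewise. Architecture $(L,\mathbf N)$, $\mathbf N=(N_0,\dots,N_L)$; parameters $\theta=(W_1,\dots,W_L,b_1,\dots,b_L)$, $W_\ell\in\mathbb R^{N_\ell\times N_{\ell-1}}$, $b_\ell\in\mathbb R^{N_\ell}$, forming $\Theta_{L,\mathbf N}$. Realization: $R_\theta(x)=W_Ly_{L-1}(x)+b_L$, $y_0=x$, $y_\ell=\rho(W_\ell y_{\ell-1}+b_\ell)$, $1\le\ell\le L-1$. $\|M\|_{q\to q}$ is the operator norm induced by $\|\cdot\|_q$. $\Theta^q_{L,\mathbf N}(r)=\{\theta:\|W_\ell\|_{q\to q}\le r,\ \|b_\ell\|_q\le r\ \forall\ell\}$. $\lfloor x\rfloor=\max\{n\in\mathbb Z:n\le x\}$; $N^{1/\infty}:=1$. *)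

From HB Require Import structures.
From mathcomp Require Import all_boot all_order all_algebra.
From mathcomp Require Import all_classical all_reals.
From mathcomp Require Import ereal exp.
Set Implicit Arguments. Unset Strict Implicit. Unset Printing Implicit Defensive.
Import Order.TTheory GRing.Theory Num.Theory.
Local Open Scope ring_scope.

Section NN.
Variable R : realType.

Definition qnorm (q : \bar R) (n : nat) (v : 'cV[R]_n) : R :=
  match q with
  | +oo%E => \big[Num.max/0]_(i < n) `|v i 0|
  | (p%:E)%E => powR (\sum_(i < n) powR `|v i 0| p) p^-1
  | -oo%E => 0
  end.

Definition opnorm (q : \bar R) (m n : nat) (M : 'M[R]_(m, n)) : R :=
  sup [set qnorm q (M *m x) | x in [set x : 'cV[R]_n | qnorm q x <= 1]].

Definition rootq (q : \bar R) (N : R) : R :=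
  match q with
  | (p%:E)%E => powR N p^-1
  | _ => 1
  end.

Definition relu (n : nat) (v : 'cV[R]_n) : 'cV[R]_n := map_mx (fun t => Num.max 0 t) v.

(* Parameters theta = (W_1..W_L, b_1..b_L) are encoded with a shift of index:
   W l : 'M_(N (l+1), N l) is W_{l+1}, b l is b_{l+1}, for l < L. *)
Fixpoint hidden (N : nat -> nat) (W : forall l, 'M[R]_(N l.+1, N l))
  (b : forall l, 'cV[R]_(N l.+1)) (x : 'cV[R]_(N 0)) (l : nat) : 'cV[R]_(N l) :=
  match l as l0 return 'cV[R]_(N l0) with
  | 0 => x
  | k.+1 => relu (W k *m hidden W b x k + b k)
  end.

Definition realization (L : nat) (N : nat -> nat) (W : forall l, 'M[R]_(N l.+1, N l))
  (b : forall l, 'cV[R]_(N l.+1)) (x : 'cV[R]_(N 0)) : 'cV[R]_(N L) :=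
  match L as L0 return 'cV[R]_(N L0) with
  | 0 => x
  | k.+1 => W k *m hidden W b x k + b k
  end.

Definition in_ball (q : \bar R) (L : nat) (N : nat -> nat)
  (W : forall l, 'M[R]_(N l.+1, N l)) (b : forall l, 'cV[R]_(N l.+1)) (r : R) : Prop :=
  forall l : nat, (l < L)%N -> opnorm q (W l) <= r /\ qnorm q (b l) <= r.

Definition quant (eta t : R) : R := (Num.floor (t / eta))%:~R * eta.

End NN.

From HB Require Import structures.
From mathcomp Require Import all_boot all_order all_algebra.
From mathcomp Require Import all_classical all_reals.
From mathcomp Require Import ereal exp.
From mathcomp Require Import ring.
Set Implicit Arguments. Unset Strict Implicit. Unset Printing Implicit Defensive.
Import Order.TTheory GRing.Theory Num.Theory.
Local Open Scope ring_scope.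

(* Let m := N_min and fix 0 <= t < min(r, eta).  Consider the network whose
   first weight matrix is t*J and whose other weight matrices are r*J, with all
   biases 0, where J is the "truncated identity" keeping the first m
   coordinates.  Since J does not increase q-norms, this network lies in the
   ball Theta^q(r).  On the input equal to D on its first m coordinates and
   0 elsewhere, every pre-activation is nonnegative, so the network outputs
   the vector equal to t*D*r^(L-1) on its first m coordinates and 0
   elsewhere; its q-norm is t * c' * r^(L-1).  As
   0 <= t < eta, Q_eta rounds the first layer to 0, so the quantized network
   is identically 0.  Hence t * c' * r^(L-1) <= eps for all such t, which gives
   min(r, eta) <= eps / (c' r^(L-1)); if eps < c' r^L this bound is < r, so the
   minimum is eta. *)

Section TruncatedIdentity.
Variable R : realType.

Definition trunc_id (m n1 n2 : nat) : 'M[R]_(n1, n2) :=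
  \matrix_(i, j) ((val i == val j) && (val i < m)%N)%:R.

Definition lead_const (n m : nat) (a : R) : 'cV[R]_n :=
  \col_(i < n) if (val i < m)%N then a else 0.

(* The k-th coordinate of x, extended by 0 beyond the length of x; it lets us
   compare coordinates of vectors of different lengths. *)
Definition coord0 n (x : 'cV[R]_n) (k : nat) : R :=
  oapp (fun j : 'I_n => x j 0) 0 (insub k).

Lemma coord0_ord n (x : 'cV[R]_n) (i : 'I_n) : coord0 x i = x i 0.
Proof. by rewrite /coord0 valK. Qed.

Lemma coord0_out n (x : 'cV[R]_n) k : (n <= k)%N -> coord0 x k = 0.
Proof. by move=> nk; rewrite /coord0 insubF // ltnNge nk. Qed.

Lemma mul_trunc_id m n1 n2 (x : 'cV[R]_n2) i :
  (trunc_id m n1 n2 *m x) i 0 = if (val i < m)%N then coord0 x i else 0.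
Proof.
rewrite mxE; case: ifP => him; last first.
  by rewrite big1 // => j _; rewrite mxE him andbF mul0r.
have neq_j (j : 'I_n2) : val i != val j -> trunc_id m n1 n2 i j * x j 0 = 0.
  by move=> /negbTE ij; rewrite mxE ij mul0r.
case: (ltnP i n2) => hin; last first.
  rewrite coord0_out // big1 // => j _; apply: neq_j.
  by rewrite neq_ltn (leq_trans (ltn_ord j) hin) orbT.
rewrite (bigD1 (Ordinal hin)) //= mxE eqxx him mul1r big1 ?addr0.
  by rewrite -(coord0_ord x (Ordinal hin)).
move=> j ji; apply: neq_j; apply: contra ji => /eqP ij.
by apply/eqP/val_inj; rewrite /= ij.
Qed.

Lemma trunc_id_lead_const m n1 n2 a : (m <= n2)%N ->
  trunc_id m n1 n2 *m lead_const n2 m a = lead_const n1 m a.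
Proof.
move=> mn2; apply/matrixP => i j; rewrite (ord1 j) mul_trunc_id [RHS]mxE.
case: ifP => // im; have in2 : (val i < n2)%N by apply: leq_trans mn2.
by rewrite (coord0_ord _ (Ordinal in2)) mxE /= im.
Qed.

(* For a nonnegative G vanishing at 0, the G-mass of J x is at most that of
   x: the coordinates of J x are among those of x, padded with zeros. *)
Lemma sum_trunc_id_le m n1 n2 (x : 'cV[R]_n2) (G : R -> R) :
  G 0 = 0 -> (forall y, 0 <= G y) ->
  \sum_(i < n1) G ((trunc_id m n1 n2 *m x) i 0) <= \sum_(j < n2) G (x j 0).
Proof.
move=> G0 Gge0.
have -> : \sum_(j < n2) G (x j 0) = \sum_(0 <= k < n2) G (coord0 x k).
  by rewrite big_mkord; apply: eq_bigr => j _; rewrite coord0_ord.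
apply: (@le_trans _ _ (\sum_(0 <= k < n1) G (coord0 x k))).
  by rewrite big_mkord; apply: ler_sum => i _; rewrite mul_trunc_id; case: ifP => // _; rewrite G0.
apply: (@le_trans _ _ (\sum_(0 <= k < n1 + n2) G (coord0 x k))).
  by rewrite [leRHS](big_cat_nat _ (n := n1)) ?leq_addr //= lerDl sumr_ge0.
rewrite [leLHS](big_cat_nat _ (n := n2)) ?leq_addl //=.
rewrite [X in _ + X]big_nat_cond [X in _ + X]big1 ?addr0 //.
by move=> k /andP[/andP[nk _] _]; rewrite coord0_out.
Qed.

Lemma powRK (a p : R) : 0 <= a -> 0 < p -> powR (powR a p) p^-1 = a.
Proof. by move=> a0 p0; rewrite -powRrM mulfV ?gt_eqF // powRr1. Qed.

Lemma qnorm0 (q : \bar R) n : (1 <= q)%E -> qnorm q (0 : 'cV[R]_n) = 0.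
Proof.
case: q => [p| |] //= p1.
  have p0 : p != 0 by rewrite gt_eqF // (lt_le_trans ltr01) // -lee_fin.
  by rewrite big1 ?powR0 ?invr_eq0 // => i _; rewrite mxE normr0 powR0.
by elim/big_ind: _ => // [x y -> ->|i _]; rewrite ?maxxx // mxE normr0.
Qed.

Lemma qnorm_scale_trunc_id_le (q : \bar R) m n1 n2 s (x : 'cV[R]_n2) :
  (1 <= q)%E -> 0 <= s -> qnorm q x <= 1 ->
  qnorm q ((s *: trunc_id m n1 n2) *m x) <= s.
Proof.
case: q => [p| |] //= p1 s0 x1; rewrite -scalemxAl; last first.
  apply: bigmax_le => // i _; rewrite mxE normrM ger0_norm // ler_piMr //.
  rewrite mul_trunc_id /coord0; case: ifP => _; last by rewrite normr0.
  case: insubP => [j _ _|_] /=; last by rewrite normr0.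
  by apply: le_trans x1; apply: le_bigmax.
have p0 : 0 < p by rewrite (lt_le_trans ltr01) // -lee_fin.
set Jx := trunc_id m n1 n2 *m x.
have sum_ge0 n (v : 'cV[R]_n) : 0 <= \sum_(i < n) powR `|v i 0| p.
  by apply: sumr_ge0 => i _; apply: powR_ge0.
have -> : \sum_(i < n1) powR `|(s *: Jx) i 0| p =
          powR s p * \sum_(i < n1) powR `|Jx i 0| p.
  by rewrite mulr_sumr; apply: eq_bigr => i _; rewrite mxE normrM ger0_norm // powRM.
rewrite powRM ?powR_ge0 // powRK // ler_piMr //.
apply: le_trans x1; apply: ge0_ler_powR; rewrite ?invr_ge0 ?nnegrE ?sum_ge0 //.
  exact: ltW.
apply: (@sum_trunc_id_le m n1 n2 x (fun y => powR `|y| p)) => [|y].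
  by rewrite normr0 powR0 // gt_eqF.
exact: powR_ge0.
Qed.

Lemma opnorm_scale_trunc_id_le (q : \bar R) m n1 n2 s :
  (1 <= q)%E -> 0 <= s -> opnorm q (s *: trunc_id m n1 n2) <= s.
Proof.
move=> q1 s0; apply: ge_sup.
  by exists (qnorm q ((s *: trunc_id m n1 n2) *m 0)), 0 => //=; rewrite qnorm0.
by move=> _ [x x1 <-]; apply: qnorm_scale_trunc_id_le.
Qed.

Lemma qnorm_lead_const (q : \bar R) n m a :
  (1 <= q)%E -> 0 <= a -> (0 < m)%N -> (m <= n)%N ->
  qnorm q (lead_const n m a) = a * rootq q m%:R.
Proof.
case: q => [p| |] //= p1 a0 m0 mn.
  have p0 : 0 < p by rewrite (lt_le_trans ltr01) // -lee_fin.
  have -> : \sum_(i < n) powR `|lead_const n m a i 0| p = m%:R * powR a p.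
    have -> : \sum_(i < n) powR `|lead_const n m a i 0| p =
              \sum_(0 <= k < n) (if (k < m)%N then powR a p else 0).
      rewrite big_mkord; apply: eq_bigr => i _; rewrite mxE.
      by case: ifP => _; rewrite ?normr0 ?powR0 ?gt_eqF // ger0_norm.
    rewrite (big_cat_nat _ (n := m)) //= [X in _ + X]big_nat_cond [X in _ + X]big1.
      rewrite addr0 big_nat_cond (eq_bigr (fun=> powR a p)).
        by rewrite -big_nat_cond sumr_const_nat subn0 mulr_natl.
      by move=> k /andP[/andP[_ ->]].
    by move=> k /andP[/andP[mk _] _]; rewrite ltnNge mk.
  by rewrite powRM ?powR_ge0 ?ler0n // powRK // mulrC.
rewrite mulr1; apply/le_anti/andP; split.
  by apply: bigmax_le => // i _; rewrite mxE; case: ifP; rewrite ?normr0 ?ger0_norm.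
have n0 : (0 < n)%N by apply: leq_trans mn.
by apply: le_trans (le_bigmax _ _ (Ordinal n0)); rewrite mxE /= m0 ger0_norm.
Qed.

Lemma relu_lead_const n m a : 0 <= a -> relu (lead_const n m a) = lead_const n m a.
Proof. by move=> a0; apply/matrixP => i j; rewrite !mxE; case: ifP; rewrite ?maxxx ?max_r. Qed.

End TruncatedIdentity.

Section Networks.
Variables (R : realType) (N : nat -> nat).

Lemma quant_small (eta t : R) : 0 <= t -> t < eta -> quant eta t = 0.
Proof.
move=> t0 t_eta; have eta0 : 0 < eta by apply: le_lt_trans t_eta.
rewrite /quant (@floor_def _ _ 0) ?mul0r // add0r mulr1z.
by rewrite divr_ge0 ?(ltW eta0) //= ltr_pdivrMr // mul1r.
Qed.

Lemma quant_scale_trunc_id (eta t : R) m n1 n2 : 0 <= t -> t < eta ->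
  map_mx (quant eta) (t *: trunc_id R m n1 n2) = 0.
Proof.
move=> t0 t_eta; have eta0 : 0 < eta by apply: le_lt_trans t_eta.
apply/matrixP => i j; rewrite !mxE.
by case: (_ && _); rewrite ?mulr1 ?mulr0 (quant_small t0 t_eta, quant_small (lexx 0) eta0).
Qed.

Lemma realization_dead_first_layer L (W : forall l, 'M[R]_(N l.+1, N l))
    (b : forall l, 'cV[R]_(N l.+1)) (x : 'cV[R]_(N 0)) :
  W 0%N = 0 -> (forall l, b l = 0) -> realization L.+1 W b x = 0.
Proof.
move=> W0 b0; suff dead j : W j *m hidden W b x j + b j = 0 by exact: dead.
elim: j => [|j IH]; first by rewrite W0 mul0mx b0 addr0.
have relu0 : relu (0 : 'cV[R]_(N j.+1)) = 0 by apply/matrixP => i k; rewrite !mxE maxxx.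
by rewrite /= IH relu0 mulmx0 b0 addr0.
Qed.

Lemma scale_lead_const n m (s a : R) : s *: lead_const n m a = lead_const n m (s * a).
Proof. by apply/matrixP => i j; rewrite !mxE; case: ifP; rewrite ?mulr0. Qed.

Definition witness_weights m (t r : R) (l : nat) : 'M[R]_(N l.+1, N l) :=
  (if l is 0 then t else r) *: trunc_id R m (N l.+1) (N l).

Definition zero_biases (l : nat) : 'cV[R]_(N l.+1) := 0.

Lemma witness_in_ball (q : \bar R) L m (t r : R) :
  (1 <= q)%E -> 0 <= t -> t <= r -> in_ball q L (witness_weights m t r) zero_biases r.
Proof.
move=> q1 t0 tr l _; split; last by rewrite qnorm0 // (le_trans t0 tr).
have [s0 sr] : 0 <= (if l is 0 then t else r) /\ (if l is 0 then t else r) <= r.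
  by case: l; split; rewrite ?(le_trans t0 tr).
exact: le_trans (opnorm_scale_trunc_id_le m _ _ q1 s0) sr.
Qed.

(* On the input equal to D on its first m coordinates, layer j of the witness network
   outputs t*D*r^j on its first m coordinates: no ReLU is ever active. *)
Lemma witness_preactivation m (t r D : R) j :
  0 <= t -> 0 <= r -> 0 <= D -> (forall l, (l <= j)%N -> (m <= N l)%N) ->
  witness_weights m t r j *m hidden (witness_weights m t r) zero_biases
      (lead_const (N 0) m D) j = lead_const (N j.+1) m (t * D * r ^+ j).
Proof.
move=> t0 r0 D0; elim: j => [|j IH] m_le.
  by rewrite -scalemxAl trunc_id_lead_const ?m_le // scale_lead_const expr0 mulr1.
rewrite /= IH => [|l lj]; last by rewrite m_le // ltnW.
rewrite /zero_biases addr0 relu_lead_const ?mulr_ge0 ?exprn_ge0 //.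
rewrite -scalemxAl trunc_id_lead_const ?m_le // scale_lead_const exprS.
by congr lead_const; ring.
Qed.

Lemma realization_witness L m (t r D : R) :
  0 <= t -> 0 <= r -> 0 <= D -> (forall l, (l <= L)%N -> (m <= N l)%N) ->
  realization L.+1 (witness_weights m t r) zero_biases (lead_const (N 0) m D) =
  lead_const (N L.+1) m (t * D * r ^+ L).
Proof. by move=> t0 r0 D0 m_le; rewrite /= witness_preactivation // addr0. Qed.

(* For t < eta the quantized first layer vanishes, hence so does the
   quantized witness network. *)
Lemma realization_quantized_witness L m (eta t r : R) (x : 'cV[R]_(N 0)) :
  0 <= t -> t < eta ->
  realization L.+1 (fun l => map_mx (quant eta) (witness_weights m t r l))
    (fun l => map_mx (quant eta) (zero_biases l)) x = 0.
Proof.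
move=> t0 t_eta; apply: realization_dead_first_layer; first exact: quant_scale_trunc_id.
by move=> l; apply/matrixP => i j; rewrite !mxE quant_small // (le_lt_trans t0 t_eta).
Qed.

End Networks.

Lemma le_of_forall_nneg_lt (R : realFieldType) (a K : R) :
  0 <= K -> (forall t, 0 <= t -> t < a -> t <= K) -> a <= K.
Proof.
move=> K0 bound; apply/unstable.ler_ltP => t ta.
by have [/bound ->|/ltW t0] := leP 0 t; last exact: le_trans K0.
Qed.

Lemma bigmin_le_nat (F : nat -> nat) n (l : 'I_n.+1) :
  (\big[minn/F 0%N]_(i < n.+1) F i <= F l)%N.
Proof. by have := bigmin_le (F 0%N) l F; rewrite leEnat. Qed.

Lemma bigmin_gt0 (F : nat -> nat) n : (forall l, (l <= n)%N -> (0 < F l)%N) ->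
  (0 < \big[minn/F 0%N]_(i < n.+1) F i)%N.
Proof.
move=> F_gt0; elim/big_rec: _ => [|i x _ x_gt0]; first exact: F_gt0.
by rewrite leq_min x_gt0 andbT F_gt0 // -ltnS.
Qed.

Theorem mainTheorem6 (R : realType) (D : R) (L : nat) (N : nat -> nat)
  (q : \bar R) (r eta eps : R) :
  0 < D -> (0 < L)%N -> (forall l, (l <= L)%N -> (0 < N l)%N) ->
  (1 <= q)%E -> 1 <= r -> 0 < eta -> 0 < eps ->
  (forall (W : forall l, 'M[R]_(N l.+1, N l)) (b : forall l, 'cV[R]_(N l.+1)),
     in_ball q L W b r ->
     forall x : 'cV[R]_(N 0%N), (forall i, `|x i 0| <= D) ->
       qnorm q (realization L W b x
                - realization L (fun l => map_mx (quant eta) (W l))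
                                (fun l => map_mx (quant eta) (b l)) x) <= eps) ->
  let c' := D * rootq q (\big[minn/N 0%N]_(l < L.+1) N l)%:R in
  Num.min r eta <= eps / (c' * r ^+ L.-1) /\
  (eps < c' * r ^+ L -> eta <= eps / (c' * r ^+ L.-1)).
Proof.
case: L => [//|k] D0 _ N_gt0 q1 r1 eta0 eps0 err_le c' /=.
set m := \big[minn/N 0%N]_(l < k.+2) N l in c' *.
have m_le l : (l <= k.+1)%N -> (m <= N l)%N.
  by move=> lk; exact: (bigmin_le_nat N (Ordinal (lk : (l < k.+2)%N))).
have m_gt0 : (0 < m)%N by apply: bigmin_gt0.
have r0 : 0 <= r by apply: le_trans r1.
have root_gt0 : 0 < rootq q m%:R by case: (q) => //= p; rewrite powR_gt0 ?ltr0n.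
have c'_pos : 0 < c' * r ^+ k by rewrite !mulr_gt0 ?exprn_gt0 // (lt_le_trans ltr01).
(* the witness network with parameter t has error t * c' * r^k *)
have witness_error t : 0 <= t -> t < Num.min r eta -> t <= eps / (c' * r ^+ k).
  rewrite lt_min => t0 /andP[/ltW tr t_eta]; rewrite ler_pdivlMr //.
  have x_le i : `|lead_const (N 0) m D i 0| <= D.
    by rewrite mxE; case: ifP => _; rewrite ?normr0 ?ger0_norm // ltW.
  have := err_le _ _ (witness_in_ball _ m q1 t0 tr) _ x_le.
  rewrite realization_quantized_witness // subr0 realization_witness ?(ltW D0) //;
    last by move=> l lk; rewrite m_le // ltnW.
  rewrite qnorm_lead_const ?m_le //; last by rewrite !mulr_ge0 ?exprn_ge0 // ltW.
  suff -> : t * (c' * r ^+ k) = t * D * r ^+ k * rootq q m%:R by [].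
  by rewrite /c'; ring.
have min_le := le_of_forall_nneg_lt (divr_ge0 (ltW eps0) (ltW c'_pos)) witness_error.
split=> // eps_lt; move: min_le; rewrite ge_min => /orP[r_le|//].
suff : eps / (c' * r ^+ k) < r by rewrite ltNge r_le.
by rewrite ltr_pdivrMr // mulrCA -exprS.
Qed.
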